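(* Let $q$ be a prime power and let $l,l',k,t$ be positive integers such that $l\mid q+1$, $k\le\frac{q+1}{l}-1$, $t\in[l]$, $l\le\min\{k,l'\}$ and $k+l'\le q+1$. Set $n_I=k+l'$, $k_I=k$, $n_F=kt+l$, $k_F=kt$. Then there exists an access-optimal $(n_I,k_I;n_F,k_F)$ MDS merge-convertible code over $\mathbb{F}_q$, i.e., $t$ initial $[n_I,k_I]_q$ MDS codes and a final $[n_F,k_F]_q$ MDS code.
   Context: All codes are linear over $\mathbb{F}_q$; $[n]=\{1,\dots,n\}$. A $(t,1)_q$ generalized convertible code (merge-convertible when $t>1$) consists of $t$ initial linear codes $\mathcal{C}^{I_1},\dots,\mathcal{C}^{I_t}$, $\mathcal{C}^{I_i}$ an $[n_{I_i},k_{I_i}]_q$ code, a final linear $[n_F,k_F]_q$ code $\mathcal{C}^F$ with $k_F=\sum_i k_{I_i}$, and a linear bijection $\phi:\mathcal{C}^{I_1}\times\cdots\times\mathcal{C}^{I_t}\to\mathcal{C}^F$, together with: for each $i$, a set $\mathcal{U}_i$ of coordinates of $\mathcal{C}^{I_i}$ (unchanged symbols) with an injective assignment of each $u\in\mathcal{U}_i$ to a coordinate of $\mathcal{C}^F$, images of different pairs $(i,u)$ distinct, such that for all $(c_1,\dots,c_t)$ the coordinate of $\phi(c_1,\dots,c_t)$ assigned to $u$ equals the $u$-th coordinate of $c_i$; the set $\mathcal{W}$ of coordinates of $\mathcal{C}^F$ not assigned to any unchanged symbol (written symbols); and for each $i$ a set $\mathcal{R}_i$ of coordinates of $\mathcal{C}^{I_i}$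 (read symbols) such that $\phi(c_1,\dots,c_t)|_{\mathcal{W}}$ is a function of $(c_1|_{\mathcal{R}_1},\dots,c_t|_{\mathcal{R}_t})$. Read access cost $\rho_r=\sum_i|\mathcal{R}_i|$, write access cost $\rho_w=n_F-\sum_i|\mathcal{U}_i|$, access cost $\rho=\rho_r+\rho_w$. An MDS convertible code is one in which all initial and final codes are MDS; it is access-optimal if its access cost is minimal among all MDS convertible codes with the same parameters. *)

From HB Require Import structures.
From mathcomp Require Import all_boot all_order all_algebra all_field.
Set Implicit Arguments. Unset Strict Implicit. Unset Printing Implicit Defensive.
Import GRing.Theory.
Local Open Scope ring_scope.

Section Codes.
Variable F : finFieldType.

Definition wt n (c : 'rV[F]_n) : nat := #|[set j : 'I_n | c 0 j != 0]|.

Definition is_MDS n (C : {vspace 'rV[F]_n}) : Prop :=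
  (exists2 c, c \in C & (c != 0) /\ wt c = (n - \dim C + 1)%N) /\
  (forall c, c \in C -> c != 0 -> (n - \dim C + 1 <= wt c)%N).

Record conv_code (t nI kI nF kF : nat) := ConvCode {
  cI : 'I_t -> {vspace 'rV[F]_nI};
  cF : {vspace 'rV[F]_nF};
  phi : ('I_t -> 'rV[F]_nI) -> 'rV[F]_nF;
  uns : 'I_t -> {set 'I_nI};                (* unchanged symbols U_i *)
  asg : 'I_t -> 'I_nI -> 'I_nF;             (* assignment of unchanged symbols *)
  rd : 'I_t -> {set 'I_nI}                  (* read symbols R_i *)
}.

Variables (t nI kI nF kF : nat).
Implicit Type C : conv_code t nI kI nF kF.

Definition in_prod C (c : 'I_t -> 'rV[F]_nI) : Prop := forall i, c i \in cI C i.

Definition written C : {set 'I_nF} :=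
  [set j | ~~ [exists i : 'I_t, exists u in uns C i, asg C i u == j]].

Definition is_conv_code C : Prop :=
  (forall i, \dim (cI C i) = kI) /\
      \dim (cF C) = kF /\
      kF = (t * kI)%N /\
      (forall a c c', in_prod C c -> in_prod C c' ->
         phi C (fun i => a *: c i + c' i) = a *: phi C c + phi C c') /\
      (forall c, in_prod C c -> phi C c \in cF C) /\
      (forall c c', in_prod C c -> in_prod C c' -> phi C c = phi C c' -> c = c') /\
      (forall y, y \in cF C -> exists2 c, in_prod C c & phi C c = y) /\
      (forall i j u v, u \in uns C i -> v \in uns C j ->
         asg C i u = asg C j v -> i = j /\ u = v) /\
      (forall c, in_prod C c -> forall i u, u \in uns C i ->
         phi C c 0 (asg C i u) = c i 0 u) /\
      (forall c c', in_prod C c -> in_prod C c' ->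
         (forall i r, r \in rd C i -> c i 0 r = c' i 0 r) ->
         forall w, w \in written C -> phi C c 0 w = phi C c' 0 w).

Definition is_MDS_conv_code C : Prop :=
  is_conv_code C /\ (forall i, is_MDS (cI C i)) /\ is_MDS (cF C).

Definition read_cost C : nat := (\sum_(i < t) #|rd C i|)%N.
Definition write_cost C : nat := (nF - \sum_(i < t) #|uns C i|)%N.
Definition access_cost C : nat := (read_cost C + write_cost C)%N.

Definition access_optimal C : Prop :=
  is_MDS_conv_code C /\
  forall C' : conv_code t nI kI nF kF,
    is_MDS_conv_code C' -> (access_cost C <= access_cost C')%N.

End Codes.

(* The final code is a generalized Reed-Solomon (GRS) code of dimension [k t] on
   [k t + l] points of the projective line, whose points [l + i k + a] ([a < k])
   form the block [A_i].  With [R_i] the product of the linear factors of the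
   blocks [A_m], [m != i], the initial code [i] is a GRS code of dimension [k]
   that evaluates at the points of [A_i] on its positions [l, l + k), scaled by
   [R_i].  The conversion sends the codewords of [f_1, ..., f_t] to the codeword
   of [f_1 R_1 + ... + f_t R_t]: as [R_m] vanishes on [A_i] for [m != i], the [t]
   blocks are copied verbatim and only the first [l] symbols are recomputed, from
   the first [l] symbols of each initial codeword.  This costs [(t + 1) l], or [0]
   when [t = 1], which matches the lower bound for any MDS merge: each initial
   code has at most [k] unchanged symbols, and reading fewer than [l] symbols of
   one of them leaves a nonzero final codeword of weight at most [l]. *)

From HB Require Import structures.
From mathcomp Require Import all_boot all_order all_algebra all_field.
From mathcomp Require Import zify.
From Stdlib Require Import FunctionalExtensionality.
Set Implicit Arguments. Unset Strict Implicit. Unset Printing Implicit Defensive.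
Import GRing.Theory.
Local Open Scope ring_scope.

Lemma card_subset_between (T : finType) (A C : {set T}) m :
  A \subset C -> (#|A| <= m <= #|C|)%N ->
  exists B : {set T}, [/\ A \subset B, B \subset C & #|B| = m].
Proof.
move=> AC /andP[Am mC].
have /card_geqP [s [s_uniq s_size sCA]] : (m - #|A| <= #|C :\: A|)%N.
  by rewrite cardsD (setIidPr AC) leq_sub2r.
have : [set x in s] \subset C :\: A by apply/subsetP => x; rewrite inE => /sCA.
rewrite subsetD => /andP[sC As].
exists (A :|: [set x in s]); split; first exact: subsetUl.
  by rewrite subUset AC.
rewrite cardsU setIC (disjoint_setI0 As) cards0 cardsE (card_uniqP s_uniq) s_size.
lia.
Qed.

Lemma exists_superset_cover (T : finType) (A B : {set T}) m :
  (#|A| <= m <= #|T|)%N ->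
  exists S : {set T}, [/\ A \subset S, #|S| = m & (#|B :\: S| <= #|A| + #|B| - m)%N].
Proof.
move=> /andP[Am mT]; have [m_le_AB | AB_lt_m] := leqP m #|A :|: B|.
  have [S [AS SAB cardS]] : exists S : {set T}, [/\ A \subset S, S \subset A :|: B & #|S| = m].
    by apply: card_subset_between; rewrite ?subsetUl // Am.
  exists S; split => //; apply: leq_trans (_ : #|(A :|: B) :\: S| <= _)%N.
    by apply/subset_leq_card/setSD/subsetUr.
  by rewrite cardsD (setIidPr SAB) cardS leq_sub2r ?cardsU ?leq_subr.
have [S [ABS _ cardS]] : exists S : {set T}, [/\ A :|: B \subset S, S \subset setT & #|S| = m].
  by apply: card_subset_between; rewrite ?subsetT // cardsT (ltnW AB_lt_m).
exists S; split => //; first by apply: subset_trans ABS; apply: subsetUl.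
suff -> : B :\: S = set0 by rewrite cards0.
apply/setP => x; rewrite !inE; apply/andP => -[/negP xS xB].
by apply/xS/(subsetP ABS); rewrite inE xB orbT.
Qed.

Lemma card_interval n a b : (b <= n)%N -> #|[set j : 'I_n | (a <= j < b)%N]| = (b - a)%N.
Proof.
move=> b_le_n; rewrite -sum1dep_card -[(b - a)%N]muln1 -sum_nat_const_nat big_geq_mkord.
rewrite (big_ord_widen_cond _ (fun i => true && (a <= i)%N) (fun=> 1%N) b_le_n).
by apply: eq_bigl => j.
Qed.

Lemma val_insubd_lt n (d : 'I_n) m : (m < n)%N -> insubd d m = m :> nat.
Proof. by move=> m_lt; rewrite insubdK. Qed.

Section MDSCodes.
Variables (F : finFieldType) (n : nat).
Implicit Types (V : {vspace 'rV[F]_n}) (c : 'rV[F]_n) (S : {set 'I_n}).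

Definition zeros c : {set 'I_n} := [set j | c 0 j == 0].

Lemma wt_zeros c : wt c = (n - #|zeros c|)%N.
Proof.
have := cardsC (zeros c); rewrite card_ord => {2}<-; rewrite addKn.
by apply: eq_card => j; rewrite !inE.
Qed.

Lemma dimv_leq_rV V : (\dim V <= n)%N.
Proof. by have := dimvS (subvf V); rewrite dimvf /dim /= mul1n. Qed.

Lemma card_zeros_MDS V c : is_MDS V -> c \in V -> c != 0 -> (#|zeros c| < \dim V)%N.
Proof.
move=> [_ wt_ge] cV c_nz; have := wt_ge c cV c_nz; rewrite wt_zeros.
have : (#|zeros c| <= n)%N by apply: leq_trans (max_card _) _; rewrite card_ord.
by have := dimv_leq_rV V; lia.
Qed.

Lemma MDS_vanishing_eq0 V S c : is_MDS V -> c \in V ->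
  (\dim V <= #|S|)%N -> {in S, forall j, c 0 j = 0} -> c = 0.
Proof.
move=> MDS_V cV dimS c0; apply/eqP/contraT => c_nz.
have := card_zeros_MDS MDS_V cV c_nz; rewrite ltnNge => /negP[].
by apply: leq_trans dimS (subset_leq_card _); apply/subsetP => j /c0; rewrite inE => ->.
Qed.

Lemma MDS_vanishing_nz V S c j : is_MDS V -> c \in V -> c != 0 ->
  #|S|.+1 = \dim V -> {in S, forall j, c 0 j = 0} -> j \notin S -> c 0 j != 0.
Proof.
move=> MDS_V cV c_nz dimS c0 jS; apply/negP => /eqP cj.
have := card_zeros_MDS MDS_V cV c_nz; rewrite ltnNge => /negP[].
rewrite -dimS; have := cardsU1 j S; rewrite jS add1n => <-; apply: subset_leq_card.
by apply/subsetP => x; rewrite !inE => /predU1P[-> | /c0 ->]; rewrite ?cj.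
Qed.

Lemma exists_vanishing_nz V S : (#|S| < \dim V)%N ->
  exists c, [/\ c \in V, c != 0 & {in S, forall j, c 0 j = 0}].
Proof.
move=> S_lt_V; pose mask : 'M[F]_n := diag_mx (\row_j (j \in S)%:R).
pose f : 'End('rV[F]_n) := linfun (mulmxr mask).
have fE u j : f u 0 j = (j \in S)%:R * u 0 j.
  by rewrite lfunE /= /mask mul_mx_diag !mxE mulrC.
have dim_img : (\dim (f @: V) <= #|S|)%N.
  pose X := [seq delta_mx 0 j : 'rV[F]_n | j <- enum S].
  have imgX : (f @: V <= <<X>>)%VS.
    apply/subvP => _ /memv_imgP[u _ ->]; rewrite [f u]row_sum_delta.
    apply: memv_suml => j _; rewrite fE; case: (boolP (j \in S)) => jS.
      by rewrite memvZ // memv_span // map_f // mem_enum.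
    by rewrite mul0r scale0r mem0v.
  apply: leq_trans (dimvS imgX) _; apply: leq_trans (dim_span X) _.
  by rewrite size_map -cardE.
have : (V :&: lker f)%VS != 0%VS.
  rewrite -dimv_eq0 -lt0n; move: S_lt_V dim_img; rewrite -(limg_ker_dim f V).
  set a := \dim (V :&: _); set b := \dim (f @: V); lia.
rewrite -vpick0 => nz; have := memv_pick (V :&: lker f); rewrite memv_cap memv_ker.
move=> /andP[cV /eqP fc0]; exists (vpick (V :&: lker f)); split=> // j jS.
by move/rowP: fc0 => /(_ j); rewrite fE jS mul1r mxE.
Qed.

Lemma MDS_of_wt_ge V : (0 < \dim V)%N ->
  (forall c, c \in V -> c != 0 -> (n - \dim V + 1 <= wt c)%N) -> is_MDS V.
Proof.
move=> V_gt0 wt_ge; split=> //.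
have [S [_ _ cardS]] : exists S : {set 'I_n},
    [/\ set0 \subset S, S \subset setT & #|S| = (\dim V).-1].
  apply: card_subset_between; rewrite ?sub0set // cards0 cardsT card_ord.
  by have := dimv_leq_rV V; lia.
have [c [cV c_nz c0]] := exists_vanishing_nz (S := S) (V := V) ltac:(lia).
exists c => //; split=> //; apply/eqP; rewrite eqn_leq wt_ge // andbT wt_zeros.
have : (#|S| <= #|zeros c|)%N by apply/subset_leq_card/subsetP => j /c0; rewrite inE => ->.
lia.
Qed.

End MDSCodes.

Lemma conv_phi0 (F : finFieldType) t nI kI nF kF (C : conv_code F t nI kI nF kF) :
  is_conv_code C -> phi C (fun _ => 0) = 0.
Proof.
move=> [_ [_ [_ [lin _]]]].
have in0 : in_prod C (fun _ => 0) by move=> i; exact: mem0v.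
have /= := lin 1 _ _ in0 in0; rewrite !scale1r addr0 => phi0_twice.
by apply: (addrI (phi C (fun _ => 0))); rewrite addr0 -phi0_twice.
Qed.

Section AccessCostLowerBound.
Variables (F : finFieldType) (t nI k l : nat).
Variable C : conv_code F t nI k (k * t + l) (k * t).
Hypotheses (C_MDS : is_MDS_conv_code C) (t_gt1 : (1 < t)%N) (k_gt0 : (0 < k)%N).
Hypothesis l_le_k : (l <= k)%N.

(* Otherwise take [k + 1] unchanged symbols of code [i]: a nonzero final
   codeword vanishing on the images of [k] of them and on [k t - k - 1] further
   positions is nonzero at the image of the last one, while its preimage in code
   [i], vanishing on [k] symbols, is zero. *)
Lemma card_uns_le i : (#|uns C i| <= k)%N.
Proof.
have [[dimI [dimF [_ [_ [_ [_ [surj [asg_inj [copy _]]]]]]]]] [MDS_I MDS_F]] := C_MDS.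
rewrite leqNgt; apply/negP => k_lt_U.
have [z0 z0U] : exists z0, z0 \in uns C i by apply/card_gt0P; lia.
have [S0 [_ S0U cardS0]] :
    exists S0 : {set 'I_nI}, [/\ set0 \subset S0, S0 \subset uns C i :\ z0 & #|S0| = k].
  apply: card_subset_between; rewrite ?sub0set // cards0 /=.
  by have := cardsD1 z0 (uns C i); rewrite z0U add1n => e; rewrite -ltnS -e.
have S0_uns u : u \in S0 -> u \in uns C i by move=> /(subsetP S0U); rewrite inE => /andP[].
have [Sf [S0_Sf Sf_z0 cardSf]] : exists Sf : {set 'I_(k * t + l)},
    [/\ asg C i @: S0 \subset Sf, Sf \subset ~: [set asg C i z0] & #|Sf| = (k * t).-1].
  apply: card_subset_between.
    apply/subsetP => _ /imsetP[u uS0 ->]; rewrite !inE; apply/eqP.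
    move=> /(asg_inj i i u z0 (S0_uns u uS0) z0U) [_ uz0].
    by move: uS0 => /(subsetP S0U); rewrite uz0 !inE eqxx.
  rewrite cardsC1 card_ord card_in_imset ?cardS0; last first.
    by move=> u v /S0_uns uU /S0_uns vU /(asg_inj i i u v uU vU) [].
  nia.
have [y [yF y_nz y0]] : exists y, [/\ y \in cF C, y != 0 & {in Sf, forall j, y 0 j = 0}].
  by apply: exists_vanishing_nz; rewrite cardSf dimF; have := muln_gt0 k t; lia.
have y_z0 : y 0 (asg C i z0) != 0.
  apply: (MDS_vanishing_nz MDS_F yF y_nz _ y0).
    by rewrite cardSf dimF; have := muln_gt0 k t; lia.
  by apply/negP => /(subsetP Sf_z0); rewrite !inE eqxx.
have [c c_in yE] := surj y yF.
have ci0 : c i = 0.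
  apply: (MDS_vanishing_eq0 (MDS_I i) (c_in i) (S := S0)); first by rewrite dimI cardS0.
  move=> u uS0; rewrite -copy ?S0_uns // yE y0 //.
  by apply: (subsetP S0_Sf); apply: imset_f.
by move: y_z0; rewrite -yE copy // ci0 mxE eqxx.
Qed.

Lemma card_rd_ge i : (l <= #|rd C i|)%N.
Proof.
have conv_C := proj1 C_MDS.
have [[dimI [dimF [_ [_ [memF [inj [_ [_ [copy written_rd]]]]]]]]] [MDS_I MDS_F]] := C_MDS.
rewrite leqNgt; apply/negP => rd_lt_l.
have [S [rdS cardS uns_S]] : exists S : {set 'I_nI}, [/\ rd C i \subset S, #|S| = k.-1
    & (#|uns C i :\: S| <= #|rd C i| + #|uns C i| - k.-1)%N].
  apply: exists_superset_cover; rewrite card_ord.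
  by have := dimv_leq_rV (cI C i); rewrite dimI; lia.
have [ci [ciI ci_nz ci0]] : exists ci, [/\ ci \in cI C i, ci != 0 & {in S, forall j, ci 0 j = 0}].
  by apply: exists_vanishing_nz; rewrite cardS dimI; lia.
pose c m := if m == i then ci else 0.
have c_in : in_prod C c by move=> m; rewrite /c; case: eqP => [-> // | _]; apply: mem0v.
have zero_in : in_prod C (fun _ => 0) by move=> m; apply: mem0v.
have y_nz : phi C c != 0.
  rewrite -(conv_phi0 conv_C); apply: contra_neq ci_nz.
  by move=> /(inj _ _ c_in zero_in) /(congr1 (fun c => c i)); rewrite /c eqxx.
have := proj2 MDS_F _ (memF c c_in) y_nz; rewrite dimF.
suff : (wt (phi C c) <= #|uns C i :\: S|)%N by have := card_uns_le i; lia.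
apply: leq_trans (leq_imset_card (asg C i) _); apply/subset_leq_card/subsetP => j.
rewrite inE => yj; case: (boolP (j \in written C)) => jW.
  have agree m r : r \in rd C m -> c m 0 r = (0 : 'rV[F]_nI) 0 r.
    rewrite /c mxE; case: eqP => [-> r_rd | _ _]; rewrite ?mxE //.
    by rewrite ci0 //; apply: (subsetP rdS).
  by move: yj; rewrite (written_rd c _ c_in zero_in agree j jW) conv_phi0 // mxE eqxx.
move: jW yj; rewrite inE negbK => /existsP[m /existsP[u /andP[um /eqP <-]]].
rewrite copy // /c; case: (m =P i) um => [-> um ciu | _ _]; last by rewrite mxE eqxx.
apply: imset_f; rewrite inE um andbT.
by apply: contra ciu => uS; rewrite ci0.
Qed.

Lemma access_cost_ge : (t.+1 * l <= access_cost C)%N.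
Proof.
rewrite /access_cost /read_cost /write_cost.
have rd_ge : (t * l <= \sum_(i < t) #|rd C i|)%N.
  rewrite -[X in (X * l)%N]card_ord -sum_nat_const.
  by apply: leq_sum => i _; apply: card_rd_ge.
have uns_le : (\sum_(i < t) #|uns C i| <= t * k)%N.
  rewrite -[X in (X * k)%N]card_ord -sum_nat_const.
  by apply: leq_sum => i _; apply: card_uns_le.
by move: rd_ge uns_le; nia.
Qed.

End AccessCostLowerBound.

Section ProjectiveEvaluation.
Variables (F : finFieldType) (K : nat).

(* Evaluation at a point of the projective line [option F] of a polynomial of
   size at most [K], read as a form of degree [K - 1]: the point at infinity
   [None] picks out the coefficient of ['X^(K - 1)]. *)
Definition pev (z : option F) (p : {poly F}) : F :=
  if z is Some x then p.[x] else p`_K.-1.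

Fact pev_is_semilinear z : semilinear_for *%R (pev z).
Proof. by split=> [a p | p q]; case: z => [x|] /=; rewrite ?hornerZ ?hornerD ?coefZ ?coefD. Qed.

HB.instance Definition _ z :=
  GRing.isSemilinear.Build F {poly F} F _ (pev z) (pev_is_semilinear z).

Lemma card_pev_roots (p : {poly F}) :
  p != 0 -> (size p <= K)%N -> (#|[set z | pev z p == 0%R]| < K)%N.
Proof.
move=> p_nz p_le_K; have p_gt0 : (0 < size p)%N by rewrite size_poly_gt0.
have roots_lt : (#|[set x | root p x]| < size p)%N.
  rewrite cardE max_poly_roots ?enum_uniq //.
  by apply/allP => x; rewrite mem_enum inE.
have -> : [set z | pev z p == 0] =
    (if p`_K.-1 == 0 then [set None] else set0) :|: Some @: [set x | root p x].
  apply/setP => -[x|]; rewrite !inE /=.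
    by rewrite (mem_imset _ _ Some_inj) inE; case: ifP; rewrite ?inE.
  have /negPf-> : None \notin Some @: [set x | root p x] by apply/imsetP => -[].
  by rewrite orbF; case: ifP; rewrite ?inE.
apply: leq_ltn_trans (leq_card_setU _ _) _; rewrite (card_imset _ Some_inj).
case: ifP => [/eqP lead0 | _]; rewrite ?cards1 ?cards0; last by lia.
have : (size p <= K.-1)%N.
  apply/leq_sizeP => j; rewrite leq_eqVlt => /orP[/eqP <- // | K_le_j].
  by apply/(leq_sizeP _ _ p_le_K); lia.
lia.
Qed.

End ProjectiveEvaluation.

Lemma pevM (F : finFieldType) K1 K2 z (f g : {poly F}) :
  (0 < K1)%N -> (0 < K2)%N -> (size f <= K1)%N -> (size g <= K2)%N ->
  pev (K1 + K2).-1 z (f * g) = pev K1 z f * pev K2 z g.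
Proof.
move=> K1_gt0 K2_gt0 f_le g_le; case: z => [x|] /=; first by rewrite hornerM.
have -> : ((K1 + K2).-1.-1 = K1.-1 + K2.-1)%N by lia.
have K1_lt : (K1.-1 < (K1.-1 + K2.-1).+1)%N by lia.
rewrite coefM (bigD1 (Ordinal K1_lt)) //= addKn big1 ?addr0 // => j /eqP j_ne.
have [j_lt | j_gt | j_eq] := ltngtP j K1.-1.
- by rewrite [g`__]nth_default ?mulr0 //; apply: leq_trans g_le _; lia.
- by rewrite [f`__]nth_default ?mul0r //; apply: leq_trans f_le _; lia.
- by case: j_ne; apply: val_inj.
Qed.

Section GeneralizedReedSolomon.
Variables (F : finFieldType) (n K : nat) (pi : 'I_n -> option F) (w : 'I_n -> F).
Implicit Type p : {poly F}.

Definition grs (p : {poly F}) : 'rV[F]_n := \row_j (w j * pev K (pi j) p).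

Fact grs_is_linear : linear grs.
Proof. by move=> a p q; apply/rowP => j; rewrite !mxE linearP mulrDr mulrCA. Qed.

HB.instance Definition _ := GRing.isLinear.Build F {poly F} 'rV[F]_n _ grs grs_is_linear.

Definition GRS : {vspace 'rV[F]_n} := limg (linfun (grs \o @rVpoly F K)).

Lemma mem_GRS p : (size p <= K)%N -> grs p \in GRS.
Proof.
move=> p_le_K; apply/memv_imgP; exists (poly_rV p); first exact: memvf.
by rewrite lfunE /= poly_rV_K.
Qed.

Lemma GRS_memP c : c \in GRS -> exists2 p : {poly F}, (size p <= K)%N & c = grs p.
Proof. by case/memv_imgP => m _ ->; exists (rVpoly m); rewrite ?size_poly ?lfunE. Qed.

Hypotheses (pi_inj : injective pi) (w_nz : forall j, w j != 0).

Lemma card_zeros_grs p : p != 0 -> (size p <= K)%N -> (#|zeros (grs p)| < K)%N.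
Proof.
move=> p_nz p_le_K; apply: leq_ltn_trans (card_pev_roots p_nz p_le_K).
rewrite -(card_imset _ pi_inj); apply/subset_leq_card/subsetP => _ /imsetP[j j0 ->].
by move: j0; rewrite !inE mxE mulf_eq0 (negPf (w_nz j)).
Qed.

Hypothesis K_le_n : (K <= n)%N.

Lemma grs_eq0 p : (size p <= K)%N -> grs p = 0 -> p = 0.
Proof.
move=> p_le_K grs0; apply/eqP/contraT => p_nz.
have := card_zeros_grs p_nz p_le_K.
have -> : zeros (grs p) = setT by apply/setP => j; rewrite !inE grs0 mxE eqxx.
by rewrite cardsT card_ord ltnNge K_le_n.
Qed.

Lemma grs_rVpoly_inj : injective (grs \o @rVpoly F K).
Proof.
move=> m1 m2 /= /eqP; rewrite -subr_eq0 -linearB => /eqP /grs_eq0 eq0.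
apply/(can_inj rVpolyK)/subr0_eq/eq0.
by rewrite -linearB size_poly.
Qed.

Lemma dim_GRS : \dim GRS = K.
Proof.
rewrite limg_dim_eq ?dimvf /dim /= ?mul1n //.
by apply/eqP; rewrite capfv; apply/lker0P => m1 m2; rewrite !lfunE; apply: grs_rVpoly_inj.
Qed.

Lemma GRS_MDS : (0 < K)%N -> is_MDS GRS.
Proof.
move=> K_gt0; apply: MDS_of_wt_ge; rewrite dim_GRS //.
move=> _ /GRS_memP[p p_le_K ->] grs_nz; rewrite wt_zeros.
have p_nz : p != 0 by apply: contraNneq grs_nz => ->; rewrite linear0.
by have := card_zeros_grs p_nz p_le_K; lia.
Qed.

End GeneralizedReedSolomon.

Section ProjectiveLinePoints.
Variable F : finFieldType.

(* Point [0] is the point at infinity and points [1], ..., [#|F|] enumerate [F]. *)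
Definition fpt (j : nat) : F := nth 0 (enum F) j.-1.
Definition ppt (j : nat) : option F := if j is 0 then None else Some (fpt j).

Lemma ppt_inj j1 j2 : (j1 <= #|F|)%N -> (j2 <= #|F|)%N -> ppt j1 = ppt j2 -> j1 = j2.
Proof.
case: j1 j2 => [|j1] [|j2] //= j1_le j2_le [] /eqP.
rewrite /fpt /= nth_uniq ?enum_uniq -?cardE // => /eqP -> //.
Qed.

Lemma ppt_gt0 j : (0 < j)%N -> ppt j = Some (fpt j).
Proof. by case: j. Qed.

End ProjectiveLinePoints.

Section BlockSwap.
Variables (l k : nat).

Definition swap_blocks (i j : nat) : nat :=
  if (l <= j < l + k)%N then (j + i * k)%N
  else if (l + i * k <= j < l + i * k + k)%N then (j - i * k)%N else j.

Lemma swap_blocksK i : involutive (swap_blocks i).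
Proof.
(* The two blocks coincide ([i = 0]) or are disjoint. *)
move=> j; have : (i * k == 0)%N || (k <= i * k)%N.
  by case: i => [|i]; rewrite ?mul0n // mulSn leq_addr orbT.
rewrite /swap_blocks; do ! case: ifP; lia.
Qed.

Lemma swap_blocks_lt i j N :
  (j < N)%N -> (l + k + i * k <= N)%N -> (swap_blocks i j < N)%N.
Proof. by rewrite /swap_blocks; do ! case: ifP; lia. Qed.

End BlockSwap.

Section MergeConstruction.
Variables (F : finFieldType) (k l l' t : nat).

Definition block_pt (i a : nat) : F := fpt F (l + i * k + a).

Definition block_poly (i : nat) : {poly F} := \prod_(a < k) ('X - (block_pt i a)%:P).

Definition cofactor (i : 'I_t) : {poly F} := \prod_(m < t | m != i) block_poly m.

Definition init_pt (i : 'I_t) (j : 'I_(k + l')) : option F := ppt F (swap_blocks l k i j).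

Definition init_wt (i : 'I_t) (j : 'I_(k + l')) : F :=
  if (l <= j < l + k)%N then (cofactor i).[block_pt i (j - l)] else 1.

(* Initial code [i] evaluates at the points of block [i] on positions
   [l <= j < l + k], scaled by the cofactor of block [i]; these positions are
   copied verbatim into the final code. *)
Definition init_code (i : 'I_t) : {vspace 'rV[F]_(k + l')} := GRS k (init_pt i) (init_wt i).

Definition final_pt (j : 'I_(k * t + l)) : option F := ppt F j.

Definition final_code : {vspace 'rV[F]_(k * t + l)} := GRS (k * t) final_pt (fun _ => 1).

Hypotheses (k_gt0 : (0 < k)%N) (l_gt0 : (0 < l)%N) (t_gt0 : (0 < t)%N).
Hypotheses (l_le_l' : (l <= l')%N) (init_len : (k + l' <= #|F|.+1)%N).
Hypothesis final_len : (k * t + l <= #|F|.+1)%N.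

Lemma block_end_le (i : 'I_t) : (l + i * k + k <= k * t + l)%N.
Proof. by have := ltn_ord i; nia. Qed.

Lemma block_pt_inj (i m : 'I_t) a b : (a < k)%N -> (b < k)%N ->
  block_pt i a = block_pt m b -> i = m /\ a = b.
Proof.
move=> a_lt b_lt eq_pts.
have eq_pos : (l + i * k + a = l + m * k + b)%N.
  have := block_end_le i; have := block_end_le m => m_end i_end.
  apply: (ppt_inj (F := F)); try lia.
  by rewrite !ppt_gt0 ?addn_gt0 ?l_gt0 //; congr Some.
have /(congr1 (edivn^~ k)) : (i * k + a = m * k + b)%N by lia.
by rewrite !edivn_eq // => -[/val_inj].
Qed.

Lemma cofactor_block_pt_eq0 (i m : 'I_t) a : m != i -> (a < k)%N ->
  (cofactor i).[block_pt m a] = 0.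
Proof.
move=> m_i a_lt; rewrite horner_prod (bigD1 m) //= /block_poly horner_prod.
by rewrite (bigD1 (Ordinal a_lt)) //= hornerXsubC subrr !mul0r.
Qed.

Lemma cofactor_block_pt_neq0 (i : 'I_t) a : (a < k)%N -> (cofactor i).[block_pt i a] != 0.
Proof.
move=> a_lt; rewrite horner_prod; apply/prodf_neq0 => m m_i.
rewrite horner_prod; apply/prodf_neq0 => b _; rewrite hornerXsubC subr_eq0.
by apply: contra m_i => /eqP /(block_pt_inj a_lt (ltn_ord b)) [->].
Qed.

Lemma size_cofactor (i : 'I_t) : size (cofactor i) = (k * t.-1).+1.
Proof.
rewrite size_prod => [|m _]; last by rewrite monic_neq0 ?monic_prod_XsubC.
under eq_bigr do rewrite size_prod_XsubC /index_enum -enumT -cardT card_ord.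
by rewrite sum_nat_const cardC1 card_ord; nia.
Qed.

Lemma init_pt_inj i : injective (init_pt i).
Proof.
move=> j1 j2 /ppt_inj eq_pos; apply/val_inj/(inv_inj (swap_blocksK l k i)).
have := block_end_le i; have := ltn_ord j1; have := ltn_ord j2 => j2_lt j1_lt i_end.
by apply: eq_pos; rewrite -ltnS; apply: swap_blocks_lt; lia.
Qed.

Lemma final_pt_inj : injective final_pt.
Proof.
move=> j1 j2 /ppt_inj eq_pos; apply/val_inj/eq_pos.
  by have := ltn_ord j1; lia.
by have := ltn_ord j2; lia.
Qed.

Lemma init_wt_neq0 i j : init_wt i j != 0.
Proof.
rewrite /init_wt; case: ifP => [/andP[? ?] | _]; last exact: oner_neq0.
by rewrite cofactor_block_pt_neq0 //; lia.
Qed.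

Lemma dim_init_code i : \dim (init_code i) = k.
Proof. by rewrite dim_GRS ?leq_addr //; [apply: init_pt_inj | apply: init_wt_neq0]. Qed.

Lemma init_code_MDS i : is_MDS (init_code i).
Proof. by apply: GRS_MDS; rewrite ?leq_addr //; [apply: init_pt_inj | apply: init_wt_neq0]. Qed.

Lemma dim_final_code : \dim final_code = (k * t)%N.
Proof. by rewrite dim_GRS ?leq_addr //; [apply: final_pt_inj | move=> _; apply: oner_neq0]. Qed.

Lemma final_code_MDS : is_MDS final_code.
Proof.
apply: GRS_MDS; rewrite ?leq_addr ?muln_gt0 ?k_gt0 //.
  exact: final_pt_inj.
by move=> _; apply: oner_neq0.
Qed.

(* [d0], [dI] and [dF] only serve as default values of [insubd]. *)
Variables (d0 : 'I_t) (dI : 'I_(k + l')) (dF : 'I_(k * t + l)).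

(* Symbol [l + i k + a] of the final codeword is copied from symbol [l + a] of
   the [i]-th initial codeword; the first [l] symbols are recomputed. *)
Definition merge_phi (c : 'I_t -> 'rV[F]_(k + l')) : 'rV[F]_(k * t + l) :=
  \row_j if (j < l)%N then
           \sum_(i < t) pev (k * t.-1).+1 (ppt F j) (cofactor i) * c i 0 (insubd dI j)
         else c (insubd d0 ((j - l) %/ k)%N) 0 (insubd dI (l + (j - l) %% k)%N).

Lemma merge_phi_linear a c c' :
  merge_phi (fun i => a *: c i + c' i) = a *: merge_phi c + merge_phi c'.
Proof.
apply/rowP => j; rewrite !mxE /=; case: ifP => _; rewrite ?mxE //.
by rewrite mulr_sumr -big_split; apply: eq_bigr => i _; rewrite !mxE mulrDr mulrCA.
Qed.

Lemma merge_phi_block c (i : 'I_t) (u : 'I_(k + l')) (j : 'I_(k * t + l)) :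
  (l <= u < l + k)%N -> j = (u + i * k)%N :> nat -> merge_phi c 0 j = c i 0 u.
Proof.
move=> /andP[l_le_u u_lt] j_eq; have j_l : (j - l = i * k + (u - l))%N by lia.
rewrite mxE ifN -?leqNgt; last by lia.
have -> : insubd d0 ((j - l) %/ k)%N = i.
  by apply: ord_inj; rewrite val_insubd_lt j_l divnMDl // divn_small ?addn0 //; lia.
have -> : insubd dI (l + (j - l) %% k)%N = u.
  by apply: ord_inj; rewrite val_insubd_lt j_l modnMDl modn_small //; lia.
by [].
Qed.

Lemma final_block_decomp (j : 'I_(k * t + l)) : (l <= j)%N ->
  exists (i : 'I_t) (u : 'I_(k + l')), (l <= u < l + k)%N /\ j = (u + i * k)%N :> nat.
Proof.
move=> l_le_j; have j_lt := ltn_ord j.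
have i_lt : ((j - l) %/ k < t)%N by rewrite ltn_divLR //; lia.
have a_lt : ((j - l) %% k < k)%N by rewrite ltn_mod.
exists (Ordinal i_lt), (insubd dI (l + (j - l) %% k)%N); rewrite val_insubd_lt /=; last by lia.
by have := divn_eq (j - l) k; lia.
Qed.

Lemma merge_phi_grs (p : 'I_t -> {poly F}) : (forall i, size (p i) <= k)%N ->
  merge_phi (fun i => grs k (init_pt i) (init_wt i) (p i)) =
  grs (k * t) final_pt (fun _ => 1) (\sum_(i < t) p i * cofactor i).
Proof.
move=> p_le; apply/rowP => j; rewrite [RHS]mxE mul1r linear_sum /=.
have [j_lt | l_le_j] := ltnP j l.
  rewrite mxE j_lt; apply: eq_bigr => i _.
  rewrite mxE /init_wt /init_pt val_insubd_lt ?ifN; try lia.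
  have -> : swap_blocks l k i j = j by rewrite /swap_blocks; do ! case: ifP; lia.
  have kt : (k + (k * t.-1).+1).-1 = (k * t)%N by rewrite addnS /= -mulnS prednK.
  by rewrite mul1r mulrC -pevM ?size_cofactor // kt.
have [i [u [u_in j_eq]]] := final_block_decomp l_le_j; have /andP[l_le_u u_lt] := u_in.
rewrite (merge_phi_block _ u_in j_eq) mxE /init_wt u_in /init_pt /final_pt.
have -> : swap_blocks l k i u = j by rewrite /swap_blocks u_in.
have -> : ppt F j = Some (block_pt i (u - l)).
  by rewrite ppt_gt0 /block_pt; [congr (Some (fpt _ _)) | ]; lia.
rewrite /= (bigD1 i) //= big1 ?addr0 => [|m m_i]; first by rewrite hornerM mulrC.
by rewrite hornerM cofactor_block_pt_eq0 ?mulr0 1?eq_sym //; lia.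
Qed.

Lemma init_family_grs c : (forall i, c i \in init_code i) ->
  exists2 p : 'I_t -> {poly F}, (forall i, size (p i) <= k)%N &
    c = (fun i => grs k (init_pt i) (init_wt i) (p i)).
Proof.
move=> c_in; have /fin_all_exists[p pP] : forall i, exists p : {poly F},
    (size p <= k)%N /\ c i = grs k (init_pt i) (init_wt i) p.
  by move=> i; have [p p_le ->] := GRS_memP (c_in i); exists p.
exists p => [i | ]; first by case: (pP i).
by apply: functional_extensionality => i; case: (pP i).
Qed.

Lemma size_sum_cofactor (p : 'I_t -> {poly F}) : (forall i, size (p i) <= k)%N ->
  (size (\sum_(i < t) p i * cofactor i)%R <= k * t)%N.
Proof.
move=> p_le; apply: leq_trans (size_sum _ _ _) _; apply/bigmax_leqP => i _.
apply: leq_trans (size_polyMleq _ _) _; rewrite size_cofactor.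
by have := p_le i; have := prednK t_gt0; nia.
Qed.

Lemma merge_phi_mem c : (forall i, c i \in init_code i) -> merge_phi c \in final_code.
Proof.
move=> /init_family_grs[p p_le ->]; rewrite merge_phi_grs //.
exact/mem_GRS/size_sum_cofactor.
Qed.

Lemma merge_phi_inj c c' :
  (forall i, c i \in init_code i) -> (forall i, c' i \in init_code i) ->
  merge_phi c = merge_phi c' -> c = c'.
Proof.
move=> c_in c'_in phi_eq; apply: functional_extensionality => i; apply/subr0_eq.
pose S := [set u : 'I_(k + l') | (l <= u < l + k)%N].
apply: (MDS_vanishing_eq0 (init_code_MDS i) (rpredB (c_in i) (c'_in i)) (S := S)).
  by rewrite dim_init_code card_interval; lia.
move=> u; rewrite inE => u_in; have := block_end_le i; have /andP[_ u_lt] := u_in => i_end.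
pose j := insubd dF (u + i * k)%N.
have j_eq : j = (u + i * k)%N :> nat by rewrite val_insubd_lt; lia.
by rewrite !mxE -(merge_phi_block c u_in j_eq) -(merge_phi_block c' u_in j_eq) phi_eq subrr.
Qed.

Lemma merge_phi_surj y : y \in final_code ->
  exists2 c, (forall i, c i \in init_code i) & merge_phi c = y.
Proof.
move=> yF; pose enc (i : 'I_t) := grs k (init_pt i) (init_wt i) \o @rVpoly F k.
have enc_in i m : enc i m \in init_code i by apply: mem_GRS; rewrite size_poly.
pose Psi (M : 'M[F]_(t, k)) := merge_phi (fun i => enc i (row i M)).
have Psi_inj : injective Psi.
  move=> M1 M2 Psi_eq.
  have enc_eq := merge_phi_inj (fun i => enc_in i _) (fun i => enc_in i _) Psi_eq.
  apply/row_matrixP => i.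
  apply: (grs_rVpoly_inj (@init_pt_inj i) (init_wt_neq0 i) (leq_addr _ _)).
  exact: (congr1 (fun c => c i) enc_eq).
have : y \in [set Psi M | M : 'M[F]_(t, k)].
  suff -> : [set Psi M | M : 'M[F]_(t, k)] = [set y in final_code] by rewrite inE.
  apply/eqP; rewrite eqEcard; apply/andP; split.
    by apply/subsetP => _ /imsetP[M _ ->]; rewrite inE merge_phi_mem.
  by rewrite card_imset // card_mx cardsE card_vspace dim_final_code mulnC.
by case/imsetP => M _ ->; exists (fun i => enc i (row i M)).
Qed.

(* For [t = 1] the final code is a puncturing of the initial code, so no symbol
   has to be recomputed. *)
Definition nwritten : nat := if t == 1%N then 0%N else l.

Definition unchanged : {set 'I_(k + l')} := [set u : 'I_(k + l') | (nwritten <= u < l + k)%N].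
Definition read : {set 'I_(k + l')} := [set u : 'I_(k + l') | (u < nwritten)%N].
Definition assign (i : 'I_t) (u : 'I_(k + l')) : 'I_(k * t + l) := insubd dF (u + i * k)%N.

Definition merge_code : conv_code F t (k + l') k (k * t + l) (k * t) :=
  @ConvCode F t (k + l') k (k * t + l) (k * t)
    init_code final_code merge_phi (fun=> unchanged) assign (fun=> read).

Lemma nwritten_le_l : (nwritten <= l)%N.
Proof. by rewrite /nwritten; case: ifP. Qed.

Lemma t_eq1_of_unchanged_lt_l u : (u < l)%N -> (nwritten <= u)%N -> t = 1%N.
Proof. by rewrite /nwritten; case: eqP => // _; lia. Qed.

Lemma val_assign i (u : 'I_(k + l')) : (u < l + k)%N -> assign i u = (u + i * k)%N :> nat.
Proof. by move=> u_lt; rewrite val_insubd_lt //; have := block_end_le i; lia. Qed.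

Lemma assign_inj i j u v : u \in unchanged -> v \in unchanged ->
  assign i u = assign j v -> i = j /\ u = v.
Proof.
rewrite !inE => /andP[u_ge u_lt] /andP[v_ge v_lt] /(congr1 val) /=.
rewrite !val_assign // => uv_eq; have [t1 | t_ne1] := eqVneq t 1%N.
  have i_eq_j : i = j by apply: ord_inj; have := ltn_ord i; have := ltn_ord j; lia.
  by split=> //; apply: ord_inj; move: uv_eq; rewrite i_eq_j; lia.
move: u_ge v_ge; rewrite /nwritten (negPf t_ne1) => u_ge v_ge.
have /(congr1 (edivn^~ k)) : (i * k + (u - l) = j * k + (v - l))%N by lia.
by rewrite !edivn_eq; [case=> /ord_inj -> ?; split=> //; apply: ord_inj; lia | lia | lia].
Qed.

Lemma merge_phi_copy c i u : u \in unchanged -> merge_phi c 0 (assign i u) = c i 0 u.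
Proof.
rewrite inE => /andP[u_ge u_lt]; have [u_lt_l | l_le_u] := ltnP u l; last first.
  by apply: merge_phi_block; rewrite ?l_le_u ?val_assign.
have t1 := t_eq1_of_unchanged_lt_l u_lt_l u_ge.
have ord_t (m : 'I_t) : m = i by apply: ord_inj; have := ltn_ord m; have := ltn_ord i; lia.
have i0 : i = 0%N :> nat by have := ltn_ord i; lia.
rewrite mxE val_assign // i0 mul0n addn0 u_lt_l (big_pred1 i) => [|m]; last first.
  by rewrite (ord_t m) /= eqxx.
have -> : cofactor i = 1 by rewrite /cofactor big_pred0 // => m; rewrite (ord_t m) eqxx.
have -> : insubd dI u = u by apply: ord_inj; rewrite val_insubd_lt.
by rewrite t1 muln0; case: (ppt F u) => [x|] /=; rewrite ?hornerC ?coefC mul1r.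
Qed.

Lemma written_lt_nwritten j : j \in written merge_code -> (j < nwritten)%N.
Proof.
rewrite inE ltnNge; apply: contra => nwritten_le_j; apply/existsP.
have [l_le_j | j_lt_l] := leqP l j.
  have [i [u [/andP[l_le_u u_lt] j_eq]]] := final_block_decomp l_le_j.
  exists i; apply/existsP; exists u; rewrite inE (leq_trans nwritten_le_l l_le_u) u_lt /=.
  by apply/eqP/ord_inj; rewrite val_assign.
have t1 := t_eq1_of_unchanged_lt_l j_lt_l nwritten_le_j.
have d0_0 : d0 = 0 :> nat by have := ltn_ord d0; lia.
exists d0; apply/existsP; exists (insubd dI j).
have u_eq : insubd dI j = j :> nat by rewrite val_insubd_lt; lia.
have u_lt : (insubd dI j < l + k)%N by rewrite u_eq; lia.
rewrite inE u_lt u_eq nwritten_le_j /=; apply/eqP/ord_inj.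
by rewrite val_assign // u_eq d0_0 mul0n addn0.
Qed.

Lemma merge_phi_written (c c' : 'I_t -> 'rV[F]_(k + l')) :
  (forall i u, u \in read -> c i 0 u = c' i 0 u) ->
  forall j, j \in written merge_code -> merge_phi c 0 j = merge_phi c' 0 j.
Proof.
move=> agree j /written_lt_nwritten j_lt; have j_lt_l := leq_trans j_lt nwritten_le_l.
rewrite !mxE j_lt_l; apply: eq_bigr => i _; rewrite agree // inE val_insubd_lt //; lia.
Qed.

Lemma merge_code_MDS : is_MDS_conv_code merge_code.
Proof.
split; last by split; [exact: init_code_MDS | exact: final_code_MDS].
split; first exact: dim_init_code.
split; first exact: dim_final_code.
split; first by rewrite mulnC.
split; first by move=> a c c' _ _; apply: merge_phi_linear.
split; first exact: merge_phi_mem.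
split; first exact: merge_phi_inj.
split; first exact: merge_phi_surj.
split; first exact: assign_inj.
split; first by move=> c _ i u; apply: merge_phi_copy.
by move=> c c' _ _; apply: merge_phi_written.
Qed.

Lemma access_cost_merge : access_cost merge_code = (if t == 1%N then 0 else t.+1 * l)%N.
Proof.
have card_read : #|read| = nwritten.
  rewrite -[nwritten]subn0 -(@card_interval (k + l')); last by have := nwritten_le_l; lia.
  by apply: eq_card => u; rewrite !inE.
have card_unchanged : #|unchanged| = (l + k - nwritten)%N by rewrite card_interval; lia.
rewrite /access_cost /read_cost /write_cost /= card_read card_unchanged !sum_nat_const card_ord.
by rewrite /nwritten; case: eqP => [-> | _]; nia.
Qed.

End MergeConstruction.

Local Close Scope ring_scope.

Theorem mainTheorem6 (q l l' k t : nat) :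
  (exists p e, prime p /\ 0 < e /\ q = p ^ e) ->
  0 < l -> 0 < l' -> 0 < k -> 0 < t ->
  l %| q.+1 ->
  k <= q.+1 %/ l - 1 ->
  t <= l ->
  l <= minn k l' ->
  k + l' <= q.+1 ->
  forall F : finFieldType, #|F| = q ->
  exists C : conv_code F t (k + l') k (k * t + l) (k * t), access_optimal C.
Proof.
move=> _ l_gt0 _ k_gt0 t_gt0 _ k_le t_le_l; rewrite leq_min => /andP[l_le_k l_le_l'].
move=> init_len F card_F; rewrite -card_F in k_le init_len.
have final_len : k * t + l <= #|F|.+1.
  have := leq_divM #|F|.+1 l; have : k.+1 <= #|F|.+1 %/ l by lia.
  by rewrite -(leq_pmul2r l_gt0); nia.
pose d0 : 'I_t := Ordinal t_gt0.
pose dI : 'I_(k + l') := Ordinal (leq_trans k_gt0 (leq_addr l' k)).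
pose dF : 'I_(k * t + l) := Ordinal (leq_trans l_gt0 (leq_addl _ _)).
exists (@merge_code F k l l' t d0 dI dF); split; first exact: merge_code_MDS.
move=> C C_MDS; rewrite access_cost_merge //; case: eqP => // t_ne1.
by apply: (access_cost_ge C_MDS _ k_gt0 l_le_k); lia.
Qed.
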